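(* Let $p$ be an odd prime, let $q\in\mathbb{C}_p$ with $|q-1|_p<p^{-1/(p-1)}$, let $n\ge 0$ be an integer and let $x\in\mathbb{Z}_p$. Then the limit $$K_{n,q}(x):=\int_{\mathbb{Z}_p}[x+y]_q^n\,d\mu_{-q}(y)=\lim_{N\to\infty}\frac{1}{[p^N]_{-q}}\sum_{y=0}^{p^N-1}[x+y]_q^n(-q)^y$$ exists and $$K_{n,q}(x)=[2]_q\left(\frac{1}{1-q}\right)^n\sum_{k=0}^n\binom nk(-1)^k q^{xk}\frac{1}{1+q^{k+1}}.$$ In particular, $K_{n,q}:=K_{n,q}(0)=\int_{\mathbb{Z}_p}[x]_q^n\,d\mu_{-q}(x)=[2]_q\left(\frac{1}{1-q}\right)^n\sum_{l=0}^n\binom nl(-1)^l\frac{1}{1+q^{l+1}}$.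
   Context: $\mathbb{C}_p$ is the $p$-adic completion of an algebraic closure of $\mathbb{Q}_p$, with $|p|_p=1/p$. For $q\in\mathbb{C}_p$ with $|q-1|_p<p^{-1/(p-1)}$ one sets $q^x=\exp(x\log q)$ for $|x|_p\le 1$, and $[x]_q=\frac{1-q^x}{1-q}$. For an integer $M\ge 0$, $[M]_{-q}=\frac{1-(-q)^M}{1+q}$. The ($q$-Volkenborn, ''fermionic'') integral with respect to $\mu_{-q}$ of a function $g$ on $\mathbb{Z}_p$ is defined by $\int_{\mathbb{Z}_p}g(y)\,d\mu_{-q}(y)=\lim_{N\to\infty}\frac{1}{[p^N]_{-q}}\sum_{y=0}^{p^N-1}g(y)(-q)^y$. *)

From HB Require Import structures.
From Stdlib Require Import ClassicalEpsilon.
From mathcomp Require Import all_boot all_order all_algebra.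
From mathcomp Require Import reals.
Unset Printing Implicit Defensive.
Import Order.TTheory GRing.Theory Num.Theory.
Local Open Scope ring_scope.

Section PAdic.
Context {R : realType} {K : fieldType} (abs : K -> R).

Definition converges (u : nat -> K) (L : K) : Prop :=
  forall e : R, 0 < e -> exists N : nat, forall m, (N <= m)%N -> abs (u m - L) < e.

Definition cauchy_seq (u : nat -> K) : Prop :=
  forall e : R, 0 < e -> exists N : nat, forall m k, (N <= m)%N -> (N <= k)%N ->
    abs (u m - u k) < e.

(* the limit (chosen by classical choice; meaningful when the sequence converges) *)
Definition klim (u : nat -> K) : K :=
  epsilon (inhabits 0) (fun L => converges u L).

(* x belongs to the closure of the integers, i.e. to Z_p inside K *)
Definition is_padic_int (x : K) : Prop :=
  forall e : R, 0 < e -> exists z : int, abs (x - z%:~R) < e.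

Definition pexp (z : K) : K :=
  klim (fun N => \sum_(i < N) z ^+ i / (i`!)%:R).
Definition plog (q : K) : K :=
  klim (fun N => \sum_(i < N) (-1) ^+ i * (q - 1) ^+ i.+1 / (i.+1)%:R).

Definition qpow (q x : K) : K := pexp (x * plog q).

Definition qbr (q x : K) : K := (1 - qpow q x) / (1 - q).

Definition mqbr (q : K) (M : nat) : K := (1 - (- q) ^+ M) / (1 + q).

Definition fsum (p : nat) (q : K) (n : nat) (x : K) (N : nat) : K :=
  (mqbr q (p ^ N))^-1 *
  \sum_(y < p ^ N) (qbr q (x + y%:R)) ^+ n * (- q) ^+ y.

End PAdic.

From Stdlib Require Import ClassicalEpsilon.
From mathcomp Require Import all_boot all_order all_algebra.
From mathcomp Require Import reals.
From mathcomp Require Import ring lra zify.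
Import Order.TTheory GRing.Theory Num.Theory.
Local Open Scope ring_scope.

(* The exponential and logarithm series converge on the disc [|z| <= r] as soon
   as [r^(p-1) p < 1], because Legendre's formula gives
   [|i!| >= p^(-(i-1)/(p-1))].  On that disc [exp] is additive and 1-Lipschitz,
   and [exp (log q) = q]: the truncated series [E_N (l_N X)] agrees with [1 + X]
   below degree [N], as the differential equation [(1 + X) h' = h] shows, while
   its remaining coefficients are p-adically small.  Hence
   [q^(x + y) = q^x q^y] for [y] in [N], and the binomial expansion of
   [[x + y]_q^n] turns the Riemann sum into [n + 1] geometric sums in
   [(-q^(k+1))^y].  Since [p] is odd, [|1 + t| = 1] for [t] close to [1], so the
   sum differs from its claimed limit by [O(|q^(p^N) - 1|) = O(p^-N)]. *)

Lemma bernoulli_ineq {R : realDomainType} (d : R) n :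
  0 <= d -> 1 + n%:R * d <= (1 + d) ^+ n.
Proof.
move=> d0; elim: n => [|n IH]; first by rewrite mul0r addr0 expr0.
have h0 : 0 <= n%:R * d by rewrite mulr_ge0.
have h1 : 0 <= (1 + d) ^+ n by rewrite exprn_ge0 // addr_ge0.
rewrite exprS -natr1 mulrDl mul1r; nra.
Qed.

Lemma geometric_lt {R : realType} (c : R) {t e : R} : 0 <= t -> t < 1 -> 0 < e ->
  exists N, forall k, (N <= k)%N -> c * t ^+ k < e.
Proof.
move=> t0 t1 e0.
have [c0|c0] := lerP c 0.
  by exists 0%N => k _; apply: le_lt_trans e0; rewrite mulr_le0_ge0 ?exprn_ge0.
have [->|tn0] := eqVneq t 0.
  by exists 1%N => -[|k] // _; rewrite expr0n mulr0.
have tpos : 0 < t by rewrite lt_def tn0.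
set d := t^-1 - 1.
have d0 : 0 < d by rewrite subr_gt0 invf_gt1.
have cde : 0 < c / (e * d) by rewrite divr_gt0 ?mulr_gt0.
exists (Num.truncn (c / (e * d))).+1 => k hk.
have kd : c / (e * d) < k%:R by apply: lt_le_trans (truncnS_gt _) _; rewrite ler_nat.
have kd0 : 0 < k%:R * d by rewrite mulr_gt0 // (lt_trans cde kd).
have tk : t ^+ k = ((1 + d) ^+ k)^-1 by rewrite /d addrC subrK exprVn invrK.
have bern := bernoulli_ineq d k (ltW d0).
have tkd : t ^+ k <= (k%:R * d)^-1 by rewrite tk lef_pV2 ?posrE //; lra.
apply: le_lt_trans (ler_wpM2l (ltW c0) tkd) _.
by rewrite ltr_pdivrMr //; move: kd; rewrite ltr_pdivrMr ?mulr_gt0 // mulrCA.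
Qed.

Lemma geometric_sum {K : fieldType} (z : K) M :
  1 - z != 0 -> \sum_(y < M) z ^+ y = (1 - z ^+ M) / (1 - z).
Proof.
move=> z1; have := subrXX 1 z M; rewrite expr1n => ->.
rewrite mulrAC divff // mul1r.
by apply: eq_bigr => i _; rewrite expr1n mul1r.
Qed.

Section TruncatedSeries.
Context {K : fieldType}.

Definition exp_trunc (z : K) N := \sum_(i < N) z ^+ i / (i`!)%:R.

Lemma exp_trunc0 N : exp_trunc 0 N.+1 = 1.
Proof.
rewrite /exp_trunc big_ord_recl big1 => [|i _]; last by rewrite expr0n mul0r.
by rewrite expr0 fact0 divr1 addr0.
Qed.

Definition log_trunc (w : K) N := \sum_(i < N) (-1) ^+ i * w ^+ i.+1 / (i.+1)%:R.

Definition log_poly N : {poly K} := \sum_(i < N) ((-1) ^+ i / (i.+1)%:R) *: 'X^(i.+1).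

Definition exp_poly (l : {poly K}) N : {poly K} := \sum_(i < N) ((i`!)%:R)^-1 *: l ^+ i.

Lemma horner_log_poly N w : (log_poly N).[w] = log_trunc w N.
Proof.
rewrite horner_sum; apply: eq_bigr => i _.
by rewrite hornerZ hornerXn mulrAC.
Qed.

Lemma horner_exp_poly l N x : (exp_poly l N).[x] = exp_trunc l.[x] N.
Proof.
rewrite horner_sum; apply: eq_bigr => i _.
by rewrite hornerZ horner_exp mulrC.
Qed.

Lemma log_polyE N : log_poly N = 'X * \sum_(i < N) ((-1) ^+ i / (i.+1)%:R) *: 'X^i.
Proof. by rewrite mulr_sumr; apply: eq_bigr => i _; rewrite exprS scalerAr. Qed.

Hypothesis natS_neq0 : forall n, n.+1%:R != 0 :> K.

Lemma log_poly_deriv N : (1 + 'X) * (log_poly N)^`() = 1 - (- 'X) ^+ N.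
Proof.
have -> : (log_poly N)^`() = \sum_(i < N) (- 'X) ^+ i.
  rewrite raddf_sum /=; apply: eq_bigr => i _.
  rewrite derivZ derivXn -scaler_nat scalerA divfK ?natS_neq0 //.
  by rewrite [RHS]exprNn -mul_polyC rmorphXn rmorphN1.
have := subrXX (1 : {poly K}) (- 'X) N; rewrite expr1n opprK => ->.
by congr (_ * _); apply: eq_bigr => i _; rewrite expr1n mul1r.
Qed.

Lemma exp_poly_deriv l N : (exp_poly l N.+1)^`() = l^`() * exp_poly l N.
Proof.
rewrite raddf_sum big_ord_recl /= derivZ deriv_exp mulr0n scaler0 add0r mulr_sumr.
apply: eq_bigr => i _; rewrite derivZ deriv_exp /bump /= add0n -scaler_nat scalerA scalerAr.
by rewrite factS natrM invfM mulrAC mulVf ?natS_neq0 // mul1r.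
Qed.

(* The coefficient recursion [(j + 1) h_(j+1) = (1 - j) h_j] of the equation
   [(1 + X) h' = h] started at [h_0 = 1]. *)
Lemma coef_ode_solution (h : {poly K}) m : h`_0 = 1 ->
  (forall j, (j < m)%N -> ((1 + 'X) * h^`() - h)`_j = 0) ->
  forall k, (k <= m)%N -> h`_k = (k <= 1)%N%:R.
Proof.
move=> h0 hD; elim=> [|k IH] km; first by rewrite h0.
have cancel j : h`_j.+2 *+ j.+2 = 0 -> h`_j.+2 = 0.
  by move/eqP; rewrite -mulr_natr mulf_eq0 (negbTE (natS_neq0 _)) orbF => /eqP.
have := hD k km; rewrite coefB mulrDl mul1r coefD coefXM !coef_deriv.
case: k km IH => [|[|k]] km IH /=.
- by rewrite h0 addr0 mulr1n => /subr0_eq.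
- by rewrite IH ?(ltnW km) //= mulr1n addrK => /cancel.
- by rewrite IH ?(ltnW km) //= mul0rn addr0 subr0 => /cancel.
Qed.

(* The formal identity [exp (log (1 + X)) = 1 + X], truncated at degree [N]. *)
Lemma exp_log_poly_coef N k : (k < N)%N -> (exp_poly (log_poly N) N)`_k = (k <= 1)%N%:R.
Proof.
case: N => // M kM; set l := log_poly M.+1; set h := exp_poly l M.+1.
apply: (coef_ode_solution h M) => // [|j jM].
  rewrite -horner_coef0 horner_exp_poly horner_log_poly /log_trunc big1 ?exp_trunc0 // => i _.
  by rewrite expr0n mulr0 mul0r.
have -> : (1 + 'X) * h^`() - h = - ((- 'X) ^+ M.+1 * exp_poly l M) - ((M`!)%:R)^-1 *: l ^+ M.
  rewrite exp_poly_deriv mulrA log_poly_deriv /h /exp_poly big_ord_recr /=.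
  by rewrite mulrBl mul1r; set E := \sum_(i < M) _; rewrite (addrC E) opprD addrA addrK.
rewrite exprNn -mulrA mulrCA {2}/l log_polyE exprMn scalerAr.
by rewrite coefB coefN !coefXnM jM (ltn_trans jM) // oppr0 addr0.
Qed.

End TruncatedSeries.

Section Ultrametric.
Context {R : realType} {K : fieldType} (abs : K -> R).
Hypothesis abs_ge0 : forall x, 0 <= abs x.
Hypothesis abs_eq0_iff : forall x, abs x = 0 <-> x = 0.
Hypothesis absM : forall x y, abs (x * y) = abs x * abs y.
Hypothesis absD : forall x y, abs (x + y) <= Num.max (abs x) (abs y).

Lemma abs0 : abs 0 = 0. Proof. exact/abs_eq0_iff. Qed.

Lemma abs_eq0 x : (abs x == 0) = (x == 0).
Proof. by apply/eqP/eqP => /abs_eq0_iff. Qed.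

Lemma abs1 : abs 1 = 1.
Proof.
have h1 : abs 1 != 0 by rewrite abs_eq0 oner_neq0.
by apply: (mulfI h1); rewrite -absM !mulr1.
Qed.

Lemma absN1 : abs (-1) = 1.
Proof.
have : abs (-1) ^+ 2 = 1 ^+ 2 by rewrite expr2 -absM mulrNN mulr1 abs1 expr1n.
by move/eqP; rewrite eqrXn2 // ?abs_ge0 // => /eqP.
Qed.

Lemma absN x : abs (- x) = abs x.
Proof. by rewrite -mulN1r absM absN1 mul1r. Qed.

Lemma abs_distC x y : abs (x - y) = abs (y - x).
Proof. by rewrite -absN opprB. Qed.

Lemma absX x n : abs (x ^+ n) = abs x ^+ n.
Proof. by elim: n => [|n IH]; rewrite ?abs1 // !exprS absM IH. Qed.

Lemma absV x : abs x^-1 = (abs x)^-1.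
Proof.
have [->|x0] := eqVneq x 0; first by rewrite invr0 abs0 invr0.
have ax0 : abs x != 0 by rewrite abs_eq0.
by apply: (mulfI ax0); rewrite -absM !mulfV ?abs1.
Qed.

Lemma absD_le x y c : abs x <= c -> abs y <= c -> abs (x + y) <= c.
Proof. by move=> hx hy; apply: le_trans (absD x y) _; rewrite ge_max hx hy. Qed.

Lemma absD_lt x y c : abs x < c -> abs y < c -> abs (x + y) < c.
Proof. by move=> hx hy; apply: le_lt_trans (absD x y) _; rewrite gt_max hx hy. Qed.

Lemma absB_lt x y c : abs x < c -> abs y < c -> abs (x - y) < c.
Proof. by move=> hx hy; apply: absD_lt; rewrite ?absN. Qed.

Lemma absD_homo_le {g : R -> R} {x y c} : {in Num.nneg &, {homo g : a b / a <= b}} ->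
  g (abs x) <= c -> g (abs y) <= c -> g (abs (x + y)) <= c.
Proof.
move=> g_homo hx hy; have := absD x y; rewrite le_max => /orP[] h.
  by apply: le_trans hx; apply: g_homo; rewrite ?nnegrE.
by apply: le_trans hy; apply: g_homo; rewrite ?nnegrE.
Qed.

Lemma abs_sum_homo_le {g : R -> R} {I : Type} {s : seq I} {P : pred I} {F : I -> K} {c} :
  {in Num.nneg &, {homo g : a b / a <= b}} -> g 0 <= c ->
  (forall i, P i -> g (abs (F i)) <= c) -> g (abs (\sum_(i <- s | P i) F i)) <= c.
Proof.
move=> g_homo g0 hF; elim/big_rec: _ => [|i y Pi hy]; first by rewrite abs0.
by apply: absD_homo_le => //; apply: hF.
Qed.

Lemma abs_sum_le (I : Type) (s : seq I) (P : pred I) (F : I -> K) c :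
  0 <= c -> (forall i, P i -> abs (F i) <= c) -> abs (\sum_(i <- s | P i) F i) <= c.
Proof. exact: (@abs_sum_homo_le id). Qed.

Lemma abs_sum_lt (I : Type) (s : seq I) (P : pred I) (F : I -> K) c :
  0 < c -> (forall i, P i -> abs (F i) < c) -> abs (\sum_(i <- s | P i) F i) < c.
Proof.
move=> c0 hF; elim/big_rec: _ => [|i y Pi hy]; first by rewrite abs0.
by apply: absD_lt => //; apply: hF.
Qed.

Lemma abs_sum_le_sum (I : Type) (s : seq I) (F : I -> K) :
  abs (\sum_(i <- s) F i) <= \sum_(i <- s) abs (F i).
Proof.
elim/big_rec2: _ => [|i z y _ hz]; first by rewrite abs0.
have z0 : 0 <= z by apply: le_trans hz.
by apply: absD_le; [rewrite lerDl | apply: le_trans hz _; rewrite lerDr].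
Qed.

Lemma absD_eq x y : abs y < abs x -> abs (x + y) = abs x.
Proof.
move=> hyx; apply/eqP; rewrite eq_le absD_le ?(ltW hyx) //=.
have := absD (x + y) (- y); rewrite addrK absN le_max => /orP[// |].
by rewrite leNgt hyx.
Qed.

Lemma abs_nat_le1 n : abs n%:R <= 1.
Proof.
elim: n => [|n IH]; first by rewrite abs0.
by rewrite -natr1 absD_le ?abs1.
Qed.

Lemma abs_int_le1 (z : int) : abs z%:~R <= 1.
Proof. by case: z => n; rewrite ?NegzE ?mulrNz ?absN abs_nat_le1. Qed.

Lemma padic_int_abs_le1 x : is_padic_int abs x -> abs x <= 1.
Proof.
move=> /(_ 1 ltr01) [z hz].
by rewrite -(subrK z%:~R x) absD_le ?abs_int_le1 ?ltW.
Qed.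

Lemma abs_near1_eq1 t : abs (t - 1) < 1 -> abs t = 1.
Proof. by move=> h; rewrite -(subrK 1 t) addrC absD_eq abs1. Qed.

Lemma abs_expr_sub1_le t m : abs (t - 1) < 1 -> abs (t ^+ m - 1) <= abs (t - 1).
Proof.
move=> h; rewrite -{1}(expr1n K m) subrXX absM; apply: ler_piMr => //.
apply: abs_sum_le => // i _.
by rewrite !expr1n mulr1 absX abs_near1_eq1 // expr1n.
Qed.

Lemma converges_unique {u L1 L2} : converges abs u L1 -> converges abs u L2 -> L1 = L2.
Proof.
move=> h1 h2; apply/eqP; rewrite -subr_eq0; apply/eqP/abs_eq0_iff/eqP.
rewrite eq_le abs_ge0 andbT leNgt; apply/negP => hpos.
have [N1 hN1] := h1 _ hpos; have [N2 hN2] := h2 _ hpos.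
set m := maxn N1 N2.
have : abs ((u m - L2) - (u m - L1)) < abs (L1 - L2).
  by apply: absB_lt; [apply: hN2; rewrite leq_maxr | apply: hN1; rewrite leq_maxl].
have -> : (u m - L2) - (u m - L1) = L1 - L2 by ring.
by rewrite ltxx.
Qed.

Lemma klimE {u L} : converges abs u L -> klim abs u = L.
Proof.
move=> h; have hlim : converges abs u (klim abs u).
  by rewrite /klim; apply: epsilon_spec; exists L.
exact: converges_unique hlim h.
Qed.

Lemma converges_near {u v L} : converges abs u L ->
  converges abs (fun m => v m - u m) 0 -> converges abs v L.
Proof.
move=> hu hv e he; have [N1 h1] := hu e he; have [N2 h2] := hv e he.
exists (maxn N1 N2) => m hm; rewrite -(subrK (u m) (v m)) -addrA.
have := h2 m; rewrite subr0 => h2m.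
by apply: absD_lt; [apply: h2m | apply: h1]; apply: leq_trans hm; rewrite ?leq_maxl ?leq_maxr.
Qed.

Lemma convergesM {u v A B} : converges abs u A -> converges abs v B ->
  converges abs (fun m => u m * v m) (A * B).
Proof.
move=> hu hv e he.
set M := 1 + abs A + abs B.
have hA := abs_ge0 A; have hB := abs_ge0 B.
have M0 : 0 < M by rewrite /M; lra.
have eM : 0 < e / M by rewrite divr_gt0.
have [N1 h1] := hu _ eM; have [N2 h2] := hv _ ltr01; have [N3 h3] := hv _ eM.
exists (maxn N1 (maxn N2 N3)) => m; rewrite !geq_max => /and3P[m1 m2 m3].
have vM : abs (v m) <= M.
  rewrite -(subrK B (v m)) absD_le //; last by rewrite /M; lra.
  by apply: le_trans (ltW (h2 m m2)) _; rewrite /M; lra.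
have -> : u m * v m - A * B = (u m - A) * v m + A * (v m - B) by ring.
have AM : abs A <= M by rewrite /M; lra.
apply: absD_lt; rewrite absM.
  apply: le_lt_trans (ler_wpM2l (abs_ge0 _) vM) _.
  by rewrite -ltr_pdivlMr // h1.
rewrite mulrC; apply: le_lt_trans (ler_wpM2l (abs_ge0 _) AM) _.
by rewrite -ltr_pdivlMr // h3.
Qed.

Lemma converges_abs_le {u L c} : converges abs u L -> (forall m, abs (u m) <= c) -> abs L <= c.
Proof.
move=> hu hc; rewrite leNgt; apply/negP => hlt.
have [N hN] : exists N, forall m, (N <= m)%N -> abs (u m - L) < abs L - c.
  by apply: hu; rewrite subr_gt0.
have c0 : 0 <= c := le_trans (abs_ge0 _) (hc 0%N).
have huN : abs (u N) < abs L := le_lt_trans (hc N) hlt.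
have hLN : abs (L - u N) < abs L by move: (hN N (leqnn N)); rewrite abs_distC; lra.
by have := absD_lt _ _ _ huN hLN; rewrite addrC subrK ltxx.
Qed.

Lemma convergesB {u v A B} : converges abs u A -> converges abs v B ->
  converges abs (fun m => u m - v m) (A - B).
Proof.
move=> hu hv e he; have [N1 h1] := hu e he; have [N2 h2] := hv e he.
exists (maxn N1 N2) => m; rewrite geq_max => /andP[m1 m2].
have -> : u m - v m - (A - B) = (u m - A) - (v m - B) by ring.
by apply: absB_lt; [apply: h1 | apply: h2].
Qed.

Lemma converges_subr0 {u L} : converges abs (fun m => u m - L) 0 <-> converges abs u L.
Proof. by split=> h e /h[N hN]; exists N => m /hN; rewrite subr0. Qed.

Lemma converges_le {u v L} : converges abs v 0 ->
  (forall m, abs (u m - L) <= abs (v m)) -> converges abs u L.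
Proof.
move=> hv huv e he; have [N hN] := hv e he; exists N => m hm.
by apply: le_lt_trans (huv m) _; rewrite -[v m]subr0 hN.
Qed.

Lemma converges0_geometric {a : nat -> K} {m} (C : R) {t : R} : (0 < m)%N -> 0 <= t -> t < 1 ->
  (forall i, abs (a i) ^+ m <= C * t ^+ i) -> converges abs a 0.
Proof.
move=> m_gt0 t0 t1 ha e e0.
have [N hN] := geometric_lt C t0 t1 (exprn_gt0 m e0).
exists N => i hi; rewrite subr0 -(ltr_pXn2r m_gt0) ?nnegrE ?abs_ge0 ?ltW //.
exact: le_lt_trans (ha i) (hN i hi).
Qed.

Hypothesis complete : forall u : nat -> K, cauchy_seq abs u -> exists L, converges abs u L.

Lemma series_converges {a : nat -> K} : converges abs a 0 ->
  exists L, converges abs (fun N => \sum_(i < N) a i) L.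
Proof.
move=> ha; apply: complete => e he; have [N hN] := ha e he.
exists N => m k hm hk.
wlog mk : m k hm hk / (k <= m)%N.
  by move=> W; have [|/ltnW km] := leqP k m; [exact: W | rewrite abs_distC W].
rewrite -!(big_mkord xpredT) (big_cat_nat _ mk) //= addrAC subrr add0r big_nat_cond.
apply: abs_sum_lt => // i /andP[/andP[ki _] _].
by rewrite -[a i]subr0 hN // (leq_trans hk).
Qed.

Section PAdic.
Variable p : nat.
Hypothesis p_prime : prime p.
Hypothesis abs_p : abs p%:R = (p%:R)^-1.
Local Notation P := (p%:R : R).
Let powp_homo := lerXn2r (R := R) p.-1.

Lemma P_gt1 : 1 < P. Proof. by rewrite ltr1n prime_gt1. Qed.
Lemma P_gt0 : 0 < P. Proof. exact: lt_trans ltr01 P_gt1. Qed.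
Lemma P_neq0 : P != 0. Proof. by rewrite gt_eqF // P_gt0. Qed.
Lemma invP_ge0 : 0 <= P^-1. Proof. by rewrite invr_ge0 ltW // P_gt0. Qed.
Lemma predp_gt0 : (0 < p.-1)%N. Proof. by rewrite -subn1 subn_gt0 prime_gt1. Qed.

Lemma abs_coprime m : coprime p m -> abs m%:R = 1.
Proof.
move=> pm; have [a _] := Bezoutl m (prime_gt0 p_prime).
rewrite (eqP pm) => /dvdnP[k hk].
have e1 : (1 : K) = (k * p)%:R - a%:R * m%:R by rewrite -hk natrD natrM addrK.
apply/eqP; rewrite eq_le abs_nat_le1 leNgt; apply/negP => hm.
suff : abs (1 : K) < 1 by rewrite abs1 ltxx.
rewrite e1 natrM; apply: absB_lt; rewrite absM.
  apply: le_lt_trans (ler_piMl (abs_ge0 _) (abs_nat_le1 k)) _.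
  by rewrite abs_p invf_lt1 ?P_gt0 ?P_gt1.
exact: le_lt_trans (ler_piMl (abs_ge0 _) (abs_nat_le1 a)) hm.
Qed.

(* Legendre's recursion: the factors of [i!] divisible by [p] are the [p * j]
   with [j <= i %/ p]. *)
Lemma abs_fact i : abs (i`!)%:R = P^-1 ^+ (i %/ p) * abs ((i %/ p)`!)%:R.
Proof.
elim: i => [|i IH]; first by rewrite div0n mul1r.
have p_gt0 := prime_gt0 p_prime.
rewrite factS natrM absM IH divnS //.
have [pdvd|ndvd] := boolP (p %| i.+1)%N; last first.
  by rewrite abs_coprime ?prime_coprime // mul1r add0n.
have e : i.+1 = ((i %/ p).+1 * p)%N by rewrite -[LHS](divnK pdvd) divnS // pdvd.
by rewrite add1n {1}e natrM absM abs_p factS natrM absM exprS; ring.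
Qed.

(* [v_p(i!) <= (i - 1)/(p - 1)], in multiplicative form. *)
Lemma abs_fact_ge i : 1 <= abs (i`!)%:R ^+ p.-1 * P ^+ i.-1.
Proof.
elim/ltn_ind: i => i IH; rewrite abs_fact; set m := (i %/ p)%N.
have [m0|m_gt0] := posnP m.
  by rewrite m0 mul1r fact0 abs1 expr1n mul1r exprn_ege1 ?ltW ?P_gt1.
have i_gt0 : (0 < i)%N.
  by move: m_gt0; rewrite (divn_gt0 _ (prime_gt0 p_prime)); apply/leq_trans/prime_gt0.
have mi : (m < i)%N := ltn_Pdiv (prime_gt1 p_prime) i_gt0.
have mpi : (m * p <= i)%N := leq_divM i p.
have -> : i.-1 = (m * p.-1 + (m.-1 + (i - m * p)))%N.
  by case: p p_prime mpi => // p' _; lia.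
rewrite exprMn -exprM exprD mulrACA -exprMn mulVf ?P_neq0 // expr1n mul1r exprD mulrA.
apply: le_trans (IH m mi) _; rewrite ler_peMr ?exprn_ege1 ?ltW ?P_gt1 //.
exact: lt_le_trans ltr01 (IH m mi).
Qed.

Lemma abs_fact_gt0 i : 0 < abs (i`!)%:R.
Proof.
rewrite lt_def abs_ge0 andbT; apply/eqP => h.
by have := abs_fact_ge i; rewrite h expr0n gtn_eqF ?predp_gt0 // mul0r ler10.
Qed.

Lemma fact_neq0 i : (i`!)%:R != 0 :> K.
Proof. by rewrite -abs_eq0 gt_eqF ?abs_fact_gt0. Qed.

Lemma natS_neq0 n : n.+1%:R != 0 :> K.
Proof. by apply: contraNneq (fact_neq0 n.+1) => h; rewrite factS natrM h mul0r. Qed.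

Lemma inv_abs_fact_le i : (abs (i`!)%:R)^-1 ^+ p.-1 <= P ^+ i.-1.
Proof.
rewrite exprVn -div1r ler_pdivrMr ?exprn_gt0 ?abs_fact_gt0 // mulrC.
exact: abs_fact_ge.
Qed.

Lemma inv_abs_natS_le j : (abs j.+1%:R)^-1 ^+ p.-1 <= P ^+ j.
Proof.
have le_fact : abs (j.+1`!)%:R <= abs j.+1%:R.
  by rewrite factS natrM absM ler_piMr ?abs_ge0 ?abs_nat_le1.
apply: le_trans (inv_abs_fact_le j.+1); rewrite lerXn2r ?nnegrE ?invr_ge0 ?abs_ge0 //.
by rewrite lef_pV2 ?posrE ?abs_fact_gt0 // (lt_le_trans (abs_fact_gt0 _) le_fact).
Qed.

Lemma pexp0 : pexp abs 0 = 1.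
Proof.
apply: klimE => e e0; exists 1%N => -[|N] // _.
by rewrite -/(exp_trunc 0 N.+1) exp_trunc0 subrr abs0.
Qed.

(* Estimates are stated for [(p-1)]-th powers of absolute values, so that the
   bound [|i!|^-1 <= p^((i-1)/(p-1))] needs no root. *)
Section Exp.
Context {r : R}.
Hypothesis r_ge0 : 0 <= r.
Hypothesis r_small : r ^+ p.-1 < P^-1.
Local Notation theta := (r ^+ p.-1 * P).

Lemma theta_ge0 : 0 <= theta. Proof. by rewrite mulr_ge0 ?exprn_ge0 // ltW // P_gt0. Qed.
Lemma theta_lt1 : theta < 1. Proof. by rewrite -ltr_pdivlMr ?P_gt0 // div1r. Qed.
Lemma theta_le1 : theta <= 1. Proof. exact: ltW theta_lt1. Qed.

Lemma abs_exp_term_le z i : abs z <= r -> abs (z ^+ i / (i`!)%:R) ^+ p.-1 <= theta ^+ i.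
Proof.
move=> hz; rewrite absM absX absV exprMn exprMn -!exprM mulnC exprM.
apply: ler_pM; rewrite ?exprn_ge0 ?invr_ge0 ?abs_ge0 //.
  rewrite exprM; apply: lerXn2r; rewrite ?nnegrE ?exprn_ge0 ?abs_ge0 //.
  by apply: lerXn2r; rewrite ?nnegrE ?abs_ge0.
by apply: le_trans (inv_abs_fact_le i) _; rewrite ler_eXn2l ?P_gt1 // leq_pred.
Qed.

Lemma exp_trunc_converges z : abs z <= r -> converges abs (exp_trunc z) (pexp abs z).
Proof.
move=> hz; have terms0 : converges abs (fun i => z ^+ i / (i`!)%:R) 0.
  apply: (converges0_geometric 1 predp_gt0 theta_ge0 theta_lt1) => i.
  by rewrite mul1r abs_exp_term_le.
by have [L hL] := series_converges terms0; rewrite /pexp (klimE hL).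
Qed.

Lemma abs_exp_coef_le i : r ^+ i.-1 * (abs (i`!)%:R)^-1 <= 1.
Proof.
rewrite -(ler_pXn2r predp_gt0) ?nnegrE ?mulr_ge0 ?exprn_ge0 ?invr_ge0 ?abs_ge0 // expr1n.
rewrite exprMn -exprM mulnC exprM.
apply: le_trans (ler_wpM2l (exprn_ge0 _ (exprn_ge0 _ r_ge0)) (inv_abs_fact_le i)) _.
by rewrite -exprMn exprn_ile1 ?theta_ge0 ?theta_le1.
Qed.

Lemma exp_trunc_lipschitz a b N : abs a <= r -> abs b <= r ->
  abs (exp_trunc a N - exp_trunc b N) <= abs (a - b).
Proof.
move=> ha hb; rewrite -sumrB; apply: abs_sum_le => // i _.
rewrite -mulrBl subrXX -mulrA absM ler_piMr ?abs_ge0 // absM absV.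
apply: le_trans (abs_exp_coef_le i); rewrite ler_wpM2r ?invr_ge0 ?abs_ge0 //.
apply: abs_sum_le => [|j _]; first by rewrite exprn_ge0.
have ji : (j <= i.-1)%N by rewrite -ltnS prednK // (leq_ltn_trans _ (ltn_ord j)).
have -> : r ^+ i.-1 = r ^+ (i.-1 - j) * r ^+ j by rewrite -exprD subnK.
rewrite absM !absX.
by apply: ler_pM; rewrite ?exprn_ge0 ?abs_ge0 //; apply: lerXn2r; rewrite ?nnegrE ?abs_ge0.
Qed.

Lemma pexp_lipschitz a b : abs a <= r -> abs b <= r ->
  abs (pexp abs a - pexp abs b) <= abs (a - b).
Proof.
move=> ha hb; have hconv := convergesB (exp_trunc_converges a ha) (exp_trunc_converges b hb).
exact: converges_abs_le hconv (fun N => exp_trunc_lipschitz a b N ha hb).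
Qed.

Section ExpAdd.
Variables a b : K.
Hypotheses (ha : abs a <= r) (hb : abs b <= r).
Let t i j := a ^+ i / (i`!)%:R * (b ^+ j / (j`!)%:R).

Lemma exp_trunc_mul N :
  exp_trunc a N * exp_trunc b N = \sum_(0 <= i < N) \sum_(0 <= j < N) t i j.
Proof.
rewrite /exp_trunc big_distrlr /= big_mkord; apply: eq_bigr => i _.
by rewrite big_mkord.
Qed.

Lemma binomial_term N i : (i <= N)%N ->
  b ^+ (N - i) * a ^+ i *+ 'C(N, i) / (N`!)%:R = t i (N - i).
Proof.
move=> iN; rewrite /t -mulr_natr -(bin_fact iN) !natrM.
have := fact_neq0 N; rewrite -(bin_fact iN) !natrM !mulf_eq0 !negb_or => /and3P[Cn0 in0 Nin0].
by field; rewrite Cn0 in0 Nin0.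
Qed.

Lemma exp_trunc_add N : exp_trunc (a + b) N = \sum_(0 <= i < N) \sum_(0 <= j < N - i) t i j.
Proof.
elim: N => [|N IH]; first by rewrite /exp_trunc big_ord0 big_geq.
rewrite /exp_trunc big_ord_recr /= -/(exp_trunc (a + b) N) IH.
rewrite (@eq_big_nat _ _ _ 0 N.+1 _
  (fun i => \sum_(0 <= j < N - i) t i j + t i (N - i))); last first.
  by move=> i /andP[_ iN]; rewrite subSn // big_nat_recr.
rewrite big_split /= [in RHS]big_nat_recr //= subnn [in X in _ + X + _]big_geq // addr0.
congr (_ + _).
rewrite addrC exprDn big_distrl /= [RHS]big_mkord; apply: eq_bigr => i _.
by rewrite binomial_term // -ltnS.
Qed.

(* Only the products [t i j] with [N <= i + j] survive in the difference. *)
Lemma abs_exp_trunc_mul_sub_le N :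
  abs (exp_trunc a N * exp_trunc b N - exp_trunc (a + b) N) ^+ p.-1 <= theta ^+ N.
Proof.
have thetaN_ge0 := exprn_ge0 N theta_ge0.
rewrite exp_trunc_mul exp_trunc_add -sumrB.
apply: (abs_sum_homo_le powp_homo); first by rewrite expr0n gtn_eqF ?predp_gt0.
move=> i _; rewrite (big_cat_nat (leq0n (N - i)) (leq_subr i N)) /= addrAC subrr add0r.
rewrite big_nat_cond; apply: (abs_sum_homo_le powp_homo).
  by rewrite expr0n gtn_eqF ?predp_gt0.
move=> j /andP[/andP[ij _] _]; rewrite /t absM exprMn.
apply: le_trans (ler_pM _ _ (abs_exp_term_le a i ha) (abs_exp_term_le b j hb)) _;
  rewrite ?exprn_ge0 ?abs_ge0 //.
by rewrite -exprD ler_wiXn2l ?theta_ge0 ?theta_le1 //; lia.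
Qed.

Lemma pexpD : pexp abs (a + b) = pexp abs a * pexp abs b.
Proof.
have hab : abs (a + b) <= r by apply: absD_le.
have hmul := convergesM (exp_trunc_converges a ha) (exp_trunc_converges b hb).
suff hadd : converges abs (fun N => exp_trunc a N * exp_trunc b N) (pexp abs (a + b)).
  exact: converges_unique hadd hmul.
apply: converges_near (exp_trunc_converges _ hab) _.
apply: (converges0_geometric 1 predp_gt0 theta_ge0 theta_lt1) => N.
by rewrite mul1r abs_exp_trunc_mul_sub_le.
Qed.

End ExpAdd.
End Exp.

Section Log.
Variable q : K.
Hypothesis q_small : abs (q - 1) ^+ p.-1 < P^-1.
Local Notation w := (q - 1).
Local Notation r := (abs (q - 1)).
Local Notation theta := (r ^+ p.-1 * P).
Let r_ge0 : 0 <= r. Proof. exact: abs_ge0. Qed.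
Let theta_ge0 : 0 <= theta := theta_ge0 r_ge0.
Let theta_lt1 : theta < 1 := theta_lt1 q_small.
Let theta_le1 : theta <= 1 := theta_le1 q_small.

Let zero_le_bound C k : 0 <= C -> 0 ^+ p.-1 <= C * theta ^+ k.
Proof. by move=> C0; rewrite expr0n gtn_eqF ?predp_gt0 // mulr_ge0 ?exprn_ge0. Qed.

Lemma abs_log_term_le i :
  abs ((-1) ^+ i * w ^+ i.+1 / (i.+1)%:R) ^+ p.-1 <= r ^+ p.-1 * theta ^+ i.
Proof.
rewrite !absM !absX absN1 expr1n mul1r absV exprMn.
rewrite exprS exprMn -exprM mulnC exprM exprMn -mulrA.
by rewrite ler_wpM2l ?exprn_ge0 // ler_wpM2l ?exprn_ge0 ?inv_abs_natS_le.
Qed.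

Lemma abs_log_trunc_le N : abs (log_trunc w N) <= r.
Proof.
apply: abs_sum_le => // i _.
rewrite -(ler_pXn2r predp_gt0) ?nnegrE ?abs_ge0 //; apply: le_trans (abs_log_term_le i) _.
by apply: ler_piMr; rewrite ?exprn_ge0 ?exprn_ile1 ?theta_ge0 ?theta_le1.
Qed.

Lemma log_trunc_converges : converges abs (log_trunc w) (plog abs q).
Proof.
have terms0 : converges abs (fun i => (-1) ^+ i * w ^+ i.+1 / (i.+1)%:R) 0.
  exact: converges0_geometric _ predp_gt0 theta_ge0 theta_lt1 abs_log_term_le.
by have [L hL] := series_converges terms0; rewrite /plog (klimE hL).
Qed.

Lemma abs_plog_le : abs (plog abs q) <= r.
Proof. exact: converges_abs_le log_trunc_converges abs_log_trunc_le. Qed.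

Definition dominated (C : R) (Q : {poly K}) :=
  forall k, abs (Q`_k * w ^+ k) ^+ p.-1 <= C * theta ^+ k.

Lemma dominated_le {C C' Q} : C <= C' -> dominated C Q -> dominated C' Q.
Proof.
move=> CC' hQ k; apply: le_trans (hQ k) _.
by rewrite ler_wpM2r ?exprn_ge0 ?theta_ge0.
Qed.

Lemma dominated_monomial C c n : 0 <= C ->
  abs (c * w ^+ n) ^+ p.-1 <= C * theta ^+ n -> dominated C (c *: 'X^n).
Proof.
move=> C0 hc k; rewrite coefZ coefXn; have [->|_] := eqVneq k n; first by rewrite mulr1.
by rewrite mulr0 mul0r abs0 zero_le_bound.
Qed.

Lemma dominated1 : dominated 1 1.
Proof.
have -> : (1 : {poly K}) = 1 *: 'X^0 by rewrite scale1r expr0.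
by apply: dominated_monomial; rewrite // !expr0 !mulr1 abs1 expr1n.
Qed.

Lemma dominatedX : dominated 1 'X.
Proof.
have -> : 'X = 1 *: 'X^1 :> {poly K} by rewrite scale1r expr1.
apply: dominated_monomial; rewrite // !expr1 !mul1r.
by apply: ler_peMr; rewrite ?exprn_ge0 // ltW // P_gt1.
Qed.

Lemma dominated_sum (I : Type) (s : seq I) (Pr : pred I) (F : I -> {poly K}) C :
  0 <= C -> (forall i, Pr i -> dominated C (F i)) -> dominated C (\sum_(i <- s | Pr i) F i).
Proof.
move=> C0 hF k; rewrite coef_sum mulr_suml.
by apply: (abs_sum_homo_le powp_homo) => [|i /hF]; rewrite ?zero_le_bound.
Qed.

Lemma dominatedB {C Q1 Q2} : dominated C Q1 -> dominated C Q2 -> dominated C (Q1 - Q2).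
Proof.
by move=> h1 h2 k; rewrite coefB mulrBl; apply: (absD_homo_le powp_homo); rewrite ?absN.
Qed.

Lemma dominatedZ {C} c {Q} : dominated C Q -> dominated (abs c ^+ p.-1 * C) (c *: Q).
Proof.
move=> hQ k; rewrite coefZ -mulrA absM exprMn -mulrA.
by rewrite ler_wpM2l ?exprn_ge0 ?abs_ge0.
Qed.

Lemma dominatedM {C1 C2 Q1 Q2} : 0 <= C1 -> 0 <= C2 ->
  dominated C1 Q1 -> dominated C2 Q2 -> dominated (C1 * C2) (Q1 * Q2).
Proof.
move=> C1_ge0 C2_ge0 h1 h2 k; rewrite coefM mulr_suml.
apply: (abs_sum_homo_le powp_homo) => [|j _]; first by rewrite zero_le_bound ?mulr_ge0.
have jk : (j + (k - j) = k)%N by rewrite subnKC // -ltnS.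
have -> : Q1`_j * Q2`_(k - j) * w ^+ k = (Q1`_j * w ^+ j) * (Q2`_(k - j) * w ^+ (k - j)).
  by rewrite mulrACA -exprD jk.
have -> : C1 * C2 * theta ^+ k = (C1 * theta ^+ j) * (C2 * theta ^+ (k - j)).
  by rewrite mulrACA -exprD jk.
by rewrite absM exprMn; apply: ler_pM; rewrite ?exprn_ge0 ?abs_ge0 ?h1 ?h2.
Qed.

Lemma dominatedXn {C Q} n : 0 <= C -> dominated C Q -> dominated (C ^+ n) (Q ^+ n).
Proof.
move=> C0 hQ; elim: n => [|n IH]; first exact: dominated1.
by rewrite !exprS; apply: dominatedM; rewrite ?exprn_ge0.
Qed.

Lemma abs_horner_dominated_le C Q n : 0 <= C -> dominated C Q ->
  (forall k, (k < n)%N -> Q`_k = 0) -> abs Q.[w] ^+ p.-1 <= C * theta ^+ n.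
Proof.
move=> C0 hQ Q_low; rewrite horner_coef.
apply: (abs_sum_homo_le powp_homo) => [|k _]; first exact: zero_le_bound.
have [kn|nk] := ltnP k n; first by rewrite Q_low // mul0r abs0 zero_le_bound.
apply: le_trans (hQ k) _; rewrite ler_wpM2l //.
by rewrite ler_wiXn2l ?theta_ge0 ?theta_le1.
Qed.

Lemma dominated_log_poly N : dominated P^-1 (log_poly N).
Proof.
apply: dominated_sum invP_ge0 _ => i _; apply: dominated_monomial invP_ge0 _.
have -> : P^-1 * theta ^+ i.+1 = r ^+ p.-1 * theta ^+ i.
  by rewrite exprS mulrA mulrCA mulVf ?P_neq0 // mulr1.
by rewrite mulrAC abs_log_term_le.
Qed.

Lemma dominated_exp_poly N : dominated 1 (exp_poly (log_poly N) N).
Proof.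
apply: dominated_sum ler01 _ => i _.
have := dominatedZ ((i`!)%:R)^-1 (dominatedXn i invP_ge0 (dominated_log_poly N)).
apply: dominated_le; rewrite absV.
apply: le_trans (ler_wpM2r (exprn_ge0 _ invP_ge0) (inv_abs_fact_le i)) _.
by rewrite exprVn ler_pdivrMr ?exprn_gt0 ?P_gt0 // mul1r ler_eXn2l ?P_gt1 // leq_pred.
Qed.

Lemma exp_log_trunc_converges_pexp :
  converges abs (fun N => exp_trunc (log_trunc w N) N) (pexp abs (plog abs q)).
Proof.
apply: converges_near (exp_trunc_converges r_ge0 q_small _ abs_plog_le) _.
apply: converges_le (proj2 converges_subr0 log_trunc_converges) _ => N.
rewrite subr0; apply: (exp_trunc_lipschitz r_ge0 q_small).
  exact: abs_log_trunc_le.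
exact: abs_plog_le.
Qed.

Lemma exp_log_trunc_converges_q : converges abs (fun N => exp_trunc (log_trunc w N) N) q.
Proof.
apply/converges_subr0.
apply: (converges0_geometric 1 predp_gt0 theta_ge0 theta_lt1) => N.
set g : {poly K} := exp_poly (log_poly N) N - 1 - 'X.
have -> : exp_trunc (log_trunc w N) N - q = g.[w].
  by rewrite /g !hornerE horner_exp_poly horner_log_poly -addrA -opprD [1 + _]addrC subrK.
apply: abs_horner_dominated_le ler01 _ _ => [|k kN].
  exact: dominatedB (dominatedB (dominated_exp_poly N) dominated1) dominatedX.
rewrite /g !coefB (exp_log_poly_coef natS_neq0) // coef1 coefX.
by case: k {kN} => [|[|k]]; rewrite /= ?subr0 ?subrr.
Qed.

Lemma pexp_plog : pexp abs (plog abs q) = q.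
Proof. exact: converges_unique exp_log_trunc_converges_pexp exp_log_trunc_converges_q. Qed.

Lemma abs_mul_plog_le t : abs t <= 1 -> abs (t * plog abs q) <= r.
Proof. by move=> t1; rewrite absM -[r]mul1r; apply: ler_pM; rewrite ?abs_ge0 ?abs_plog_le. Qed.

Lemma qpowD t u : abs t <= 1 -> abs u <= 1 ->
  qpow abs q (t + u) = qpow abs q t * qpow abs q u.
Proof.
by move=> t1 u1; rewrite /qpow mulrDl (pexpD r_ge0 q_small) ?abs_mul_plog_le.
Qed.

Lemma qpow_nat m : qpow abs q m%:R = q ^+ m.
Proof.
elim: m => [|m IH]; first by rewrite /qpow mul0r pexp0.
rewrite -natr1 qpowD ?abs_nat_le1 ?abs1 // IH exprSr.
by rewrite /qpow mul1r pexp_plog.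
Qed.

Lemma qpowMn t k : abs t <= 1 -> qpow abs q t ^+ k = qpow abs q (t * k%:R).
Proof.
move=> t1; elim: k => [|k IH]; first by rewrite mulr0 /qpow mul0r pexp0.
have tk1 : abs (t * k%:R) <= 1.
  by have := ler_pM (abs_ge0 _) (abs_ge0 _) t1 (abs_nat_le1 k); rewrite mulr1 absM.
by rewrite exprSr IH -qpowD // -natr1 mulrDr mulr1.
Qed.

(* [q^(p^N) = exp (p^N log q)] and [exp] is 1-Lipschitz. *)
Lemma abs_expr_pN_sub1_le N : abs (q ^+ (p ^ N) - 1) <= r * P^-1 ^+ N.
Proof.
have pN1 : abs (p ^ N)%:R <= 1 by apply: abs_nat_le1.
have -> : q ^+ (p ^ N) - 1 = pexp abs ((p ^ N)%:R * plog abs q) - pexp abs 0.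
  by rewrite pexp0 -qpow_nat.
have abs0_le : abs 0 <= r by rewrite abs0.
apply: le_trans (pexp_lipschitz r_ge0 q_small _ _ (abs_mul_plog_le _ pN1) abs0_le) _.
by rewrite subr0 absM natrX absX abs_p mulrC ler_wpM2r ?exprn_ge0 ?invP_ge0 ?abs_plog_le.
Qed.

Lemma abs_q_sub1_lt1 : r < 1.
Proof.
rewrite -(ltr_pXn2r predp_gt0) ?nnegrE ?ler01 // expr1n.
by apply: lt_trans q_small _; rewrite invf_lt1 ?P_gt0 ?P_gt1.
Qed.

Section FermionicSum.
Hypothesis p_odd : odd p.
Variables (n : nat) (x : K).
Hypothesis x_int : abs x <= 1.

Lemma abs2 : abs 2 = 1.
Proof.
apply: abs_coprime; rewrite prime_coprime //; apply/negP => /(@dvdn_leq _ 2 isT) p_le2.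
have p2 : p = 2%N by apply/eqP; rewrite eqn_leq p_le2 prime_gt1.
by move: p_odd; rewrite p2.
Qed.

Lemma abs_1D t : abs (t - 1) < 1 -> abs (1 + t) = 1.
Proof.
move=> t1; have -> : 1 + t = 2 + (t - 1) by ring.
by rewrite absD_eq abs2.
Qed.

Lemma add1r_neq0 t : abs (t - 1) < 1 -> 1 + t != 0.
Proof. by move=> /abs_1D t1; rewrite -abs_eq0 t1 oner_neq0. Qed.

Lemma abs_exprq_sub1_lt1 j : abs (q ^+ j - 1) < 1.
Proof. exact: le_lt_trans (abs_expr_sub1_le q j abs_q_sub1_lt1) abs_q_sub1_lt1. Qed.

Let a k := (1 - q)^-1 ^+ n * 'C(n, k)%:R * (-1) ^+ k * qpow abs q (x * k%:R).

Lemma qbr_expr_expand y : qbr abs q (x + y%:R) ^+ n * (- q) ^+ y =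
  \sum_(k < n.+1) a k * (- q ^+ k.+1) ^+ y.
Proof.
rewrite /qbr qpowD ?abs_nat_le1 // qpow_nat exprMn exprDn !big_distrl /=.
apply: eq_bigr => k _; rewrite expr1n mul1r exprNn exprMn qpowMn // /a.
rewrite [(- q) ^+ y]exprNn [(- q ^+ k.+1) ^+ y]exprNn -!exprM mulSn exprD.
by rewrite -mulr_natr [(y * k)%N]mulnC; ring.
Qed.

Lemma fsumE N : fsum abs p q n x N = (1 + q) / (1 + q ^+ (p ^ N)) *
  \sum_(k < n.+1) a k * ((1 + (q ^+ (p ^ N)) ^+ k.+1) / (1 + q ^+ k.+1)).
Proof.
have pN_odd : odd (p ^ N) by rewrite oddX p_odd orbT.
have oddN t : (- t) ^+ (p ^ N) = - t ^+ (p ^ N).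
  by rewrite exprNn -signr_odd pN_odd expr1 mulN1r.
rewrite /fsum /mqbr oddN opprK invf_div; congr (_ * _).
under eq_bigr => y _ do rewrite qbr_expr_expand.
rewrite exchange_big /=; apply: eq_bigr => k _.
rewrite -mulr_sumr geometric_sum ?opprK ?add1r_neq0 ?abs_exprq_sub1_lt1 //.
by rewrite oddN !opprK -exprM mulnC exprM.
Qed.

Lemma abs_fsum_sub_le N :
  abs (fsum abs p q n x N - (1 + q) * (1 - q)^-1 ^+ n *
    \sum_(k < n.+1) 'C(n, k)%:R * (-1) ^+ k * qpow abs q (x * k%:R) / (1 + q ^+ k.+1))
  <= abs (1 + q) * (\sum_(k < n.+1) abs (a k / (1 + q ^+ k.+1))) * abs (q ^+ (p ^ N) - 1).
Proof.
set T := q ^+ (p ^ N).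
have T1 : abs (T - 1) < 1 by apply: abs_exprq_sub1_lt1.
have -> : fsum abs p q n x N - (1 + q) * (1 - q)^-1 ^+ n *
    \sum_(k < n.+1) 'C(n, k)%:R * (-1) ^+ k * qpow abs q (x * k%:R) / (1 + q ^+ k.+1) =
  (1 + q) * \sum_(k < n.+1) a k / (1 + q ^+ k.+1) * ((1 + T ^+ k.+1) / (1 + T) - 1).
  rewrite fsumE -/T -mulrA !mulr_sumr -sumrB.
  by apply: eq_bigr => k _; rewrite /a; ring.
rewrite absM -mulrA ler_wpM2l ?abs_ge0 //.
apply: le_trans (abs_sum_le_sum _ _ _) _; rewrite mulr_suml ler_sum // => k _.
rewrite absM ler_wpM2l ?abs_ge0 //.
have -> : (1 + T ^+ k.+1) / (1 + T) - 1 = T * (T ^+ k - 1) / (1 + T).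
  by rewrite exprS; field; rewrite add1r_neq0.
rewrite !absM absV abs_1D // invr1 mulr1 abs_near1_eq1 // mul1r.
exact: abs_expr_sub1_le.
Qed.

Lemma fsum_converges : converges abs (fsum abs p q n x)
  ((1 + q) * (1 - q)^-1 ^+ n *
     \sum_(k < n.+1) 'C(n, k)%:R * (-1) ^+ k * qpow abs q (x * k%:R) / (1 + q ^+ k.+1)).
Proof.
set B := abs (1 + q) * \sum_(k < n.+1) abs (a k / (1 + q ^+ k.+1)).
have invP_lt1 : P^-1 < 1 by rewrite invf_lt1 ?P_gt0 ?P_gt1.
move=> e e0; have [N hN] := geometric_lt (B * r) invP_ge0 invP_lt1 e0.
exists N => m mN; apply: le_lt_trans (abs_fsum_sub_le m) _.
apply: le_lt_trans (hN m mN); rewrite -[B * r * _]mulrA.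
apply: ler_wpM2l; last exact: abs_expr_pN_sub1_le.
by rewrite mulr_ge0 ?abs_ge0 // sumr_ge0 // => k _; apply: abs_ge0.
Qed.

End FermionicSum.
End Log.
End PAdic.
End Ultrametric.

Lemma closed_abs_ge0 {R : realType} {K : closedFieldType} {abs : K -> R} :
  (forall x y, abs (x * y) = abs x * abs y) -> forall x, 0 <= abs x.
Proof.
move=> absM x; have [y] := @solve_monicpoly K 2 (fun i => if i == 0%N then x else 0) isT.
rewrite big_ord_recr big_ord1 /= mul0r addr0 expr0 mulr1 => <-.
by rewrite expr2 absM -expr2 sqr_ge0.
Qed.

Theorem mainTheorem1
  (R : realType) (K : closedFieldType) (abs : K -> R) (p : nat)
  (hp : prime p) (hodd : odd p)
  (abs0 : forall x : K, abs x = 0 <-> x = 0)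
  (absM : forall x y : K, abs (x * y) = abs x * abs y)
  (absD : forall x y : K, abs (x + y) <= Num.max (abs x) (abs y))
  (hcomplete : forall u : nat -> K, cauchy_seq abs u -> exists L, converges abs u L)
  (absp : abs (p%:R) = (p%:R)^-1)
  (q : K) (hq : abs (q - 1) ^+ (p - 1) < (p%:R)^-1) (hq1 : q != 1)
  (n : nat) (x : K) (hx : is_padic_int abs x) :
  converges abs (fsum abs p q n x)
    ((1 + q) * (1 - q)^-1 ^+ n *
       \sum_(k < n.+1) 'C(n, k)%:R * (-1) ^+ k * qpow abs q (x * k%:R)
                        / (1 + q ^+ k.+1))
  /\
  converges abs (fsum abs p q n 0)
    ((1 + q) * (1 - q)^-1 ^+ n *
       \sum_(l < n.+1) 'C(n, l)%:R * (-1) ^+ l / (1 + q ^+ l.+1)).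

Proof.
have abs_ge0 := closed_abs_ge0 absM.
have q_small : abs (q - 1) ^+ p.-1 < (p%:R)^-1 by rewrite -subn1.
have conv := fsum_converges abs abs_ge0 abs0 absM absD hcomplete p hp absp q q_small hodd n.
split; first exact/conv/(padic_int_abs_le1 abs abs_ge0 abs0 absM absD x hx).
have abs00 : abs 0 <= 1 by rewrite (proj2 (abs0 0) erefl) ler01.
have qpow0 k : qpow abs q (0 * k%:R) = 1.
  by rewrite mul0r /qpow mul0r (pexp0 abs abs_ge0 abs0 absM absD).
have -> : \sum_(l < n.+1) 'C(n, l)%:R * (-1) ^+ l / (1 + q ^+ l.+1) =
    \sum_(k < n.+1) 'C(n, k)%:R * (-1) ^+ k * qpow abs q (0 * k%:R) / (1 + q ^+ k.+1).
  by apply: eq_bigr => k _; rewrite qpow0 mulr1.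
exact: conv 0 abs00.
Qed.
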